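(* Let $\mathcal{B}$ be a $d$-dimensional manifold with a torsion-free flat connection $\nabla$ and $F\in C^\infty(\mathcal{B})$. If $F$ satisfies Condition N (weak nondegeneracy) at every point of $\mathcal{B}$, then $F$ satisfies the Rüssmann condition.
   Context: $\mathcal{K}_b=\ker dF_b$. Condition N at $b$: $X\in\mathcal{K}_b$ and $\nabla_X\nabla F=0$ at $b$ imply $X=0$. For a parallel vector field $X$ on an open set $\mathcal{O}$, $\Omega_X=dF(X)$ and $\Sigma_X=\{c\in\mathcal{O}:\Omega_X(c)=0\}$. Rüssmann condition: for every open $\mathcal{O}\subset\mathcal{B}$ and every non-vanishing parallel vector field $X$ on $\mathcal{O}$, $\Omega_X$ does not vanish identically on any nonempty open subset of $\mathcal{O}$ (equivalently $\Sigma_X$ has empty interior; in flat coordinates, the image of $\xi\mapsto(\partial F/\partial\xi_k)_k$ over an open set does not lie in a hyperplane through the origin). *)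

From HB Require Import structures.
From mathcomp Require Import all_boot all_order all_algebra.
From mathcomp Require Import all_classical all_reals all_analysis.
Set Implicit Arguments. Unset Strict Implicit. Unset Printing Implicit Defensive.
Import Order.TTheory GRing.Theory Num.Theory.
Import numFieldNormedType.Exports.
Local Open Scope classical_set_scope.
Local Open Scope ring_scope.

Fixpoint Ck_on (R : realType) (d : nat) (k : nat) (U : set 'rV[R]_d)
    (g : 'rV[R]_d -> R^o) : Prop :=
  match k with
  | 0 => forall y, U y -> {for y, continuous g}
  | k'.+1 => (forall y, U y -> {for y, continuous g}) /\
             (forall y, U y -> differentiable g y) /\
             (forall v : 'rV[R]_d, Ck_on k' U (fun y => 'D_v g y))
  end.

Definition smooth_on (R : realType) (d : nat) (U : set 'rV[R]_d)
    (g : 'rV[R]_d -> R^o) : Prop := forall k, Ck_on k U g.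

(* A d-dimensional manifold with a torsion-free flat connection, presented   *)
(* by an atlas of flat (affine) charts: the chart transitions are affine     *)
(* maps y |-> y *m A + c with A invertible, and the connection nabla is the *)
(* one whose Christoffel symbols vanish in every chart of the atlas.         *)
Record flat_manifold (R : realType) (d : nat) (B : topologicalType) := {
  chart : Type;
  cdom : chart -> set B;
  cmap : chart -> B -> 'rV[R]_d;
  cinv : chart -> 'rV[R]_d -> B;
  cdom_open : forall i, open (cdom i);
  ccover : forall b : B, exists i, cdom i b;
  cimg_open : forall i, open (cmap i @` cdom i);
  cinvK : forall i x, cdom i x -> cinv i (cmap i x) = x;
  cmapK : forall i y, (cmap i @` cdom i) y -> cmap i (cinv i y) = y;
  cmap_cont : forall i x, cdom i x -> {for x, continuous (cmap i)};
  cinv_cont : forall i y, (cmap i @` cdom i) y -> {for y, continuous (cinv i)};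
  trA : chart -> chart -> 'M[R]_d;
  trc : chart -> chart -> 'rV[R]_d;
  trA_unit : forall i j, trA i j \in unitmx;
  ctrans : forall i j x, cdom i x -> cdom j x ->
     cmap j x = cmap i x *m trA i j + trc i j
}.

Section FlatDefs.
Variables (R : realType) (d : nat) (B : topologicalType)
          (M : flat_manifold R d B).

Definition cimg (i : chart M) : set 'rV[R]_d := cmap i @` cdom i.

Definition locF (F : B -> R) (i : chart M) : 'rV[R]_d -> R^o :=
  fun y => F (cinv i y).

Definition smooth_fun (F : B -> R) : Prop :=
  forall i, smooth_on (cimg i) (locF F i).

(* Condition N at b: in a flat chart i around b, with X the components of a *)
(* tangent vector at b: dF_b(X) = 0 (X in K_b) and (nabla_X nabla F)_b = 0,  *)
(* i.e. D_X (D_Y F) = 0 at b for every Y, imply X = 0.                      *)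
Definition conditionN (F : B -> R) (b : B) : Prop :=
  forall i, cdom i b ->
  forall X : 'rV[R]_d,
    'D_X (locF F i) (cmap i b) = 0 ->
    (forall Y : 'rV[R]_d,
        'D_X (fun y => 'D_Y (locF F i) y) (cmap i b) = 0) ->
    X = 0.

(* A vector field on O, given by its components X i x in each flat chart i  *)
(* (at x in O inter cdom i), compatible with the chart transitions.          *)
Definition vector_field (O : set B) (X : chart M -> B -> 'rV[R]_d) : Prop :=
  forall i j x, O x -> cdom i x -> cdom j x -> X j x = X i x *m trA i j.

(* parallel (nabla X = 0): components locally constant in flat charts *)
Definition parallel (O : set B) (X : chart M -> B -> 'rV[R]_d) : Prop :=
  vector_field O X /\
  forall i x, O x -> cdom i x ->
    \forall y \near x, (O y /\ cdom i y) -> X i y = X i x.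

Definition nonvanishing (O : set B) (X : chart M -> B -> 'rV[R]_d) : Prop :=
  forall i x, O x -> cdom i x -> X i x != 0.

Definition Omega_zero (F : B -> R) (X : chart M -> B -> 'rV[R]_d) (c : B)
  : Prop :=
  forall i, cdom i c -> 'D_(X i c) (locF F i) (cmap i c) = 0.

Definition Sigma (O : set B) (F : B -> R) (X : chart M -> B -> 'rV[R]_d)
  : set B := [set c | O c /\ Omega_zero F X c].

Definition russmann (F : B -> R) : Prop :=
  forall (O : set B) (X : chart M -> B -> 'rV[R]_d),
    open O -> parallel O X -> nonvanishing O X ->
    forall W : set B, open W -> W `<=` O -> W !=set0 ->
      ~ (forall c, W c -> Omega_zero F X c).

End FlatDefs.

From HB Require Import structures.
From mathcomp Require Import all_boot all_order all_algebra.
From mathcomp Require Import all_classical all_reals all_analysis.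
Set Implicit Arguments. Unset Strict Implicit. Unset Printing Implicit Defensive.
Import Order.TTheory GRing.Theory Num.Theory.
Import numFieldNormedType.Exports.
Local Open Scope classical_set_scope.
Local Open Scope ring_scope.

(* If Omega_X vanished on a nonempty open W, take c in W and a flat chart
   around c.  There X is a constant nonzero vector X0 near c, so the local
   representative f of F has D_X0 f = 0 on a ball.  By the mean value theorem
   f is constant along the lines y + t X0 inside the ball, hence so are the
   difference quotients of f in any direction w, hence so is D_w f: thus
   D_X0 (D_w f) = 0 at c for every w.  Together with dF_c(X0) = 0, Condition N
   at c forces X0 = 0. *)

Section DirectionalDerivatives.
Variables (R : realType) (V : normedModType R) (f : V -> R^o).

Let line_quotientE (z v : V) (s h : R) :
  h^-1 *: ((fun t : R => f (z + t *: v)) (h *: 1 + s) - f (z + s *: v)) =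
  h^-1 *: (f (h *: v + (z + s *: v)) - f (z + s *: v)).
Proof. by rewrite scaler1 scalerDl addrCA. Qed.

Lemma derivable_line (z v : V) (s : R) :
  derivable (fun t : R => f (z + t *: v)) s 1 = derivable f (z + s *: v) v.
Proof. by rewrite /derivable; under eq_fun do rewrite line_quotientE. Qed.

Lemma derive_line (z v : V) (s : R) :
  'D_1 (fun t : R => f (z + t *: v)) s = 'D_v f (z + s *: v).
Proof. by rewrite /derive; under eq_fun do rewrite line_quotientE. Qed.

Lemma derive_shift (a w y : V) : 'D_w (fun x => f (x + a)) y = 'D_w f (y + a).
Proof. by rewrite /derive; under eq_fun do rewrite /= -addrA. Qed.

Lemma derive_eq0_segment (z v : V) (a b : R) : a <= b ->
  (forall s, a <= s <= b ->
     derivable f (z + s *: v) v /\ 'D_v f (z + s *: v) = 0) ->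
  f (z + b *: v) = f (z + a *: v).
Proof.
move=> ab fv0; apply/eqP; rewrite -subr_eq0; apply/eqP.
pose g t := f (z + t *: v).
have [||c _ ->] := @MVT_segment R g (fun _ => 0) a b ab; last by rewrite mul0r.
- move=> s; rewrite in_itv /= => /andP[/ltW ? /ltW ?].
  have [gs <-] : derivable g s 1 /\ 'D_1 g s = 0.
    by rewrite derivable_line derive_line; apply: fv0; apply/andP.
  exact: derivableP.
- apply: derivable_within_continuous => s; rewrite in_itv /= => sab.
  by rewrite derivable_line; case: (fv0 s sab).
Qed.

Lemma derive_eq0_ball_line (y0 v z : V) (e t : R) :
  (forall y, ball y0 e y -> derivable f y v /\ 'D_v f y = 0) ->
  ball y0 (e / 2) z -> `|t *: v| < e / 2 -> f (z + t *: v) = f z.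
Proof.
move=> fv0 z_near tv_small.
have segment_in_ball s : `|s| <= `|t| -> ball y0 e (z + s *: v).
  move=> st; rewrite -ball_normE /= opprD addrA (splitr e).
  apply: (le_lt_trans (ler_normB _ _)); apply: ltrD.
    by rewrite -ball_normE in z_near.
  by apply: le_lt_trans tv_small; rewrite !normrZ ler_wpM2r.
case: (leP 0 t) => t0.
- have := @derive_eq0_segment z v 0 t t0; rewrite scale0r addr0; apply.
  move=> s /andP[s0 st]; apply/fv0/segment_in_ball.
  by rewrite !ger0_norm // (le_trans s0 st).
- have := @derive_eq0_segment z v t 0 (ltW t0); rewrite scale0r addr0 => <- //.
  move=> s /andP[ts s0]; apply/fv0/segment_in_ball.
  by rewrite !ler0_norm ?(ltW t0) // lerN2.
Qed.

Lemma derive_derive_eq0 (y0 v : V) :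
  (\forall y \near y0, derivable f y v /\ 'D_v f y = 0) ->
  forall w, 'D_v ('D_w f) y0 = 0.
Proof.
move=> /nbhs_ballP[e e0 fv0] w.
have e20 : 0 < e / 2 by rewrite divr_gt0.
have Dw_cst t : `|t *: v| < e / 2 -> 'D_w f (t *: v + y0) = 'D_w f y0.
  move=> tv; rewrite addrC -derive_shift; apply: near_eq_derive.
  near=> y; apply: derive_eq0_ball_line fv0 _ tv.
  by near: y; exact: nbhsx_ballx.
have small_steps : \forall h \near 0^', `|h *: v| < e / 2.
  have : (fun h : R => h *: v) @ 0^' --> (0 : V).
    by rewrite -(scale0r v); apply: cvgZr_tmp; exact: cvg_within.
  move=> /(_ _ (nbhsx_ballx (0 : V) _ e20)) near_ball.
  apply: filterS (near_ball : \forall h \near 0^', ball 0 (e / 2) (h *: v)).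
  by move=> h; rewrite -ball_normE /= sub0r normrN.
rewrite {1}/derive; apply: (lim_near_cst (@norm_hausdorff _ R^o)).
by apply: filterS small_steps => h hv /=; rewrite Dw_cst // subrr scaler0.
Unshelve. all: by end_near.
Qed.

End DirectionalDerivatives.

Section FlatCharts.
Variables (R : realType) (d : nat) (B : topologicalType).
Variable M : flat_manifold R d B.

Lemma smooth_fun_differentiable (F : B -> R) (i : chart M) (y : 'rV[R]_d) :
  smooth_fun M F -> cimg i y -> differentiable (locF F i) y.
Proof. by move=> /(_ i 1%N) [_ [dF _]]; exact: dF. Qed.

Lemma near_chart_pullback (i : chart M) (c : B) (P : B -> Prop) :
  cdom i c -> (\forall c' \near c, P c') ->
  \forall y \near cmap i c, cimg i y /\ P (cinv i y).
Proof.
move=> ci Pc; apply: filterI.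
  by apply: open_nbhs_nbhs; split; [exact: cimg_open | exists c].
have cinv_cvg : cinv i @ cmap i c --> c.
  by rewrite -{2}(cinvK ci); apply: cinv_cont; exists c.
exact: cinv_cvg.
Qed.

Lemma Omega_zero_near_chart (F : B -> R) (O W : set B)
    (X : chart M -> B -> 'rV[R]_d) (c : B) (i : chart M) :
  parallel O X -> open W -> W `<=` O ->
  (forall c', W c' -> Omega_zero F X c') ->
  W c -> cdom i c ->
  \forall y \near cmap i c, cimg i y /\ 'D_(X i c) (locF F i) y = 0.
Proof.
move=> [_ X_cst] Wo WO W0 Wc ci.
have near_c : \forall c' \near c,
    W c' /\ cdom i c' /\ (O c' /\ cdom i c' -> X i c' = X i c).
  apply: filterI; first exact: open_nbhs_nbhs.
  apply: filterI; first by apply: open_nbhs_nbhs; split => //; exact: cdom_open.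
  exact: X_cst (WO c Wc) ci.
apply: filterS (near_chart_pullback ci near_c) => y [yi [Wy [yd Xy]]].
split=> //; have := W0 _ Wy i yd; rewrite cmapK // Xy //; split=> //; exact: WO.
Qed.

End FlatCharts.

Theorem mainTheorem10 (R : realType) (d : nat) (B : topologicalType)
  (hB : hausdorff_space B) (M : flat_manifold R d B) (F : B -> R) :
  smooth_fun M F ->
  (forall b : B, conditionN M F b) ->
  russmann M F.
Proof.
move=> Fs condN O X _ Xpar Xnv W Wo WO [c Wc] W0.
have [i ci] := ccover M c.
have DX0 := Omega_zero_near_chart Xpar Wo WO W0 Wc ci.
have DX0_derivable : \forall y \near cmap i c,
    derivable (locF F i) y (X i c) /\ 'D_(X i c) (locF F i) y = 0.
  apply: filterS DX0 => y [yi D0]; split=> //.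
  exact/diff_derivable/smooth_fun_differentiable.
have X0 : X i c = 0.
  apply: (condN c i ci) => [|w]; first by have [_ ->] := nbhs_singleton DX0.
  exact: derive_derive_eq0 DX0_derivable w.
by move: (Xnv i c (WO c Wc) ci); rewrite X0 eqxx.
Qed.
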